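(* Let $b(x)=\frac14x^4+\frac12px^2+qx$ with $p<0$, $q\in\mathbb{R}$, and $N(\eta,\tau)=\int_{-\infty}^{\infty}e^{2\tau[\eta\lambda-b(\lambda)]}\,d\lambda$. Define, for $(x,y,t),(r,s,u)\in\mathbb{R}^3$, $$\mathcal{S}[(x,y,t),(r,s,u)]=c\int_0^\infty\!\!\int_{-\infty}^\infty\tau\, e^{\tau[i(t-u)+i\eta(y-s)-(b(x)+b(r)-\eta(x+r))]}[N(\eta,\tau)]^{-1}\,d\eta\,d\tau,$$ and for $z,w\in\mathbb{C}^2$ $$S(z,w)=c\iint_{\tau>0}\tau\, e^{\eta\tau[z_1+\bar w_1]+i\tau[z_2-\bar w_2]}[N(\eta,\tau)]^{-1}\,d\eta\,d\tau,$$ with $c>0$ an absolute constant. Suppose $x,r\in\mathbb{R}$ satisfy either ($x=r$ and $|x|>\sqrt{-p}$) or $|x|=|r|=\sqrt{-p}$. Then $\mathcal{S}[(x,0,0),(r,0,0)]=+\infty$ (the integral, whose integrand is non-negative, diverges). Also, for $h,k\in\mathbb{R}$ with $\delta=h+k>0$, $$\lim_{\delta\to0^+}S[(x,\,i(b(x)+h)),(r,\,i(b(r)+k))]=\infty.$$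
   Context: Here $(x,i(b(x)+h))$ denotes the point $(z_1,z_2)=(x+i0,\,0+i(b(x)+h))\in\mathbb{C}^2$. The function $S$ is the Szeg\''o kernel of $\Omega=\{(z_1,z_2):\operatorname{Im}z_2>b(\operatorname{Re}z_1)\}$ and $\mathcal{S}$ is its expression on $\partial\Omega\cong\mathbb{R}^3$. *)

From HB Require Import structures.
From mathcomp Require Import all_boot all_order all_algebra.
From mathcomp Require Import all_classical all_reals all_analysis.
From mathcomp Require Import complex.
Set Implicit Arguments. Unset Strict Implicit. Unset Printing Implicit Defensive.
Import Order.TTheory GRing.Theory Num.Theory.
Local Open Scope classical_set_scope.
Local Open Scope ring_scope.

Section Defs.
Variable R : realType.

Definition bfun (p q x : R) : R := x ^+ 4 / 4 + p * x ^+ 2 / 2 + q * x.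

Definition Nfun (p q eta tau : R) : \bar R :=
  (\int[@lebesgue_measure R]_(l in [set: R])
     (expR (2 * tau * (eta * l - bfun p q l)))%:E)%E.

Definition cexp (z : R[i]) : R[i] :=
  Complex (expR (complex.Re z) * cos (complex.Im z)) (expR (complex.Re z) * sin (complex.Im z)).

Definition Sbdry_integrand (c p q : R) (x y t r s u : R) (tau eta : R) : R[i] :=
  (cexp (Complex (- (tau * (bfun p q x + bfun p q r - eta * (x + r))))
                 (tau * ((t - u) + eta * (y - s))))
   * ((c * tau / fine (Nfun p q eta tau)) : R)%:C)%C.

Definition S_integrand (c p q : R) (z1 z2 w1 w2 : R[i]) (tau eta : R) : R[i] :=
  (cexp ((eta * tau)%:C * (z1 + w1^*) + 'i * tau%:C * (z2 - w2^*))
   * ((c * tau / fine (Nfun p q eta tau)) : R)%:C)%C.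

(* Value of a kernel whose integrand F is real and nonnegative on tau > 0:
   the iterated Lebesgue integral \int_0^oo \int_R F d eta d tau in \bar R. *)
Definition kernel_value (F : R -> R -> R[i]) : \bar R :=
  (\int[@lebesgue_measure R]_(tau in `]0%R, +oo[)
     \int[@lebesgue_measure R]_(eta in [set: R]) (complex.Re (F tau eta))%:E)%E.

Definition bpt1 (x : R) : R[i] := Complex x 0.
Definition bpt2 (p q x h : R) : R[i] := Complex 0 (bfun p q x + h).

End Defs.

From HB Require Import structures.
From mathcomp Require Import all_boot all_order all_algebra.
From mathcomp Require Import all_classical all_reals all_analysis.
From mathcomp Require Import complex.
From mathcomp Require Import ring lra measurable_realfun.
Import Order.TTheory GRing.Theory Num.Theory.
Local Open Scope classical_set_scope.
Local Open Scope ring_scope.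

(* On the points of the theorem both integrands equal the nonnegative density
   e^{τ(η(x+r) − b(x) − b(r) − δ)} cτ / N(η,τ), with δ = 0 on the boundary and δ = h + k
   inside.  For τ ≥ 1 and |η − b'(x)| ≤ 1/τ, the exponent 2τ(ηλ − b(λ)) of N is dominated
   by τ(η(x+r) − b(x) − b(r)) + const − a(λ − m)²: if x = r this comes from the identity
   b(λ) − b(x) − b'(x)(λ − x) = (λ − x)²(((λ − x)/2 + x)² + (x² + p)/2) with x² + p > 0,
   and if |x| = |r| = √−p from b(λ) − qλ = (λ² + p)²/4 − p²/4, whose minima are ±√−p.
   A Gaussian integral then gives N ≤ C e^{τ(η(x+r) − b(x) − b(r))}, so the density is at
   least c' τ e^{−τδ} on an η-window of length 2/τ.  Integrating, the kernel is at least
   2c'(T − 1)e^{−Tδ} for every T ≥ 1: this is +∞ for δ = 0 and exceeds any M once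
   T ≈ 1/δ. *)

Section integral_bounds.
Variable R : realType.
Local Notation mu := (@lebesgue_measure R).

Lemma ge0_le_integral_nonmeasurable (D : set R) (f g : R -> \bar R) :
  (forall x, D x -> (0 <= f x)%E) -> (forall x, D x -> (f x <= g x)%E) ->
  (\int[mu]_(x in D) f x <= \int[mu]_(x in D) g x)%E.
Proof.
move=> f0 fg.
have g0 x : D x -> (0 <= g x)%E by move=> Dx; exact: le_trans (f0 x Dx) (fg x Dx).
rewrite !ge0_integralE//.
apply: ge_ereal_sup => _ [h /= hf <-].
apply: ereal_sup_ubound; exists h => //= x.
apply: le_trans (hf x) _.
rewrite /patch; case: ifPn => // /[!inE] Dx; exact: fg.
Qed.

Lemma integral_ge_itv (D : set R) (f : R -> \bar R) (a b K : R) :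
  measurable D -> `[a, b] `<=` D -> a <= b -> 0 <= K ->
  (forall x, D x -> (0 <= f x)%E) -> (forall x, a <= x <= b -> (K%:E <= f x)%E) ->
  ((K * (b - a))%:E <= \int[mu]_(x in D) f x)%E.
Proof.
move=> mD sD ab K0 f0 Kf.
have intK : (\int[mu]_(x in D) (K * \1_(`[a, b] : set R) x)%:E = (K * (b - a))%:E)%E.
  under eq_integral do rewrite EFinM.
  rewrite ge0_integralZl_EFin //; last first.
    by apply/measurable_EFinP; apply: measurable_funTS; exact: measurable_indic.
  rewrite integral_indic // setIidl //.
  transitivity (K%:E * mu [set` `[a, b]])%E; first by [].
  rewrite lebesgue_measure_itv /= lte_fin.
  by case: ltgtP ab => // -> _; rewrite subrr mulr0 mule0.
rewrite -intK; apply: ge0_le_integral_nonmeasurable => x Dx.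
  by rewrite lee_fin mulr_ge0 // indicE; case: (_ \in _).
rewrite indicE; case: (boolP (x \in _)) => [|_]; last by rewrite mulr0 f0.
by rewrite inE /= in_itv /= mulr1; exact: Kf.
Qed.

Lemma normal_peak_sqrt_gt0 (a : R) : 0 < a -> 0 < normal_peak (Num.sqrt (a^-1 / 2)).
Proof. by move=> a0; apply: normal_peak_gt0; rewrite sqrtr_eq0 -ltNge divr_gt0 // invr_gt0. Qed.

Lemma integral_expR_le_gauss (f : R -> R) (K a m : R) : 0 < a ->
  (forall l, f l <= K - a * (l - m) ^+ 2) ->
  (\int[mu]_(l in [set: R]) (expR (f l))%:E <=
     (expR K / normal_peak (Num.sqrt (a^-1 / 2)))%:E)%E.
Proof.
move=> a0 fK; set s := Num.sqrt (a^-1 / 2).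
have s2 : s ^+ 2 *+ 2 = a^-1.
  rewrite /s sqr_sqrtr; last by rewrite divr_ge0 // invr_ge0 ltW.
  by rewrite -mulr_natr mulfVK // pnatr_eq0.
have s0 : s != 0 by apply: contra_eq_neq s2 => ->; rewrite expr0n /= mul0rn eq_sym invr_neq0 ?gt_eqF.
have pk0 : 0 < normal_peak s by exact: normal_peak_gt0.
apply: (@le_trans _ _ (\int[mu]_(l in [set: R])
   ((expR K / normal_peak s)%:E * (normal_pdf m s l)%:E))%E).
  apply: ge0_le_integral_nonmeasurable => l _; first by rewrite lee_fin expR_ge0.
  rewrite -EFinM lee_fin /normal_pdf (negbTE s0) /normal_fun.
  rewrite mulrA divfK ?gt_eqF // -expRD ler_expR s2 invrK; move: (fK l); lra.
rewrite ge0_integralZl_EFin //.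
- by rewrite integral_normal_pdf mule1.
- by move=> l _; rewrite lee_fin normal_pdf_ge0.
- by apply/measurable_EFinP; exact: measurable_normal_pdf.
- by rewrite divr_ge0 ?expR_ge0 ?ltW.
Qed.

End integral_bounds.

Section szego_kernel.
Context {R : realType} (p q : R).

Lemma Nfun_gt0 (eta tau : R) : 0 <= tau -> (0 < Nfun p q eta tau)%E.
Proof.
move=> t0; set Z := `|eta| + 1 + `|p| + `|q|.
have exponent_ge l : 0 <= l <= 1 -> - Z <= eta * l - bfun p q l.
  move=> /andP[l0 l1]; rewrite /Z /bfun.
  have etal : - `|eta| <= eta * l.
    have : `|eta * l| <= `|eta| by rewrite normrM (ger0_norm l0); have := normr_ge0 eta; nra.
    by rewrite ler_norml => /andP[].
  have l2 : l ^+ 2 <= 1 by nra.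
  have l4 : l ^+ 4 <= 1 by rewrite (_ : 4 = 2 * 2)%N // exprM; nra.
  have pl : p * l ^+ 2 <= `|p| by have := ler_norm p; have := normr_ge0 p; have := sqr_ge0 l; nra.
  have ql : q * l <= `|q| by have := ler_norm q; have := normr_ge0 q; nra.
  have := normr_ge0 p; lra.
apply: (@lt_le_trans _ _ (expR (- (2 * tau * Z)) * (1 - 0))%:E).
  by rewrite lte_fin subr0 mulr1 expR_gt0.
apply: integral_ge_itv => // l /exponent_ge le; rewrite lee_fin ler_expR; nra.
Qed.

Definition szego_density (c x r d tau eta : R) : R :=
  expR (tau * (eta * (x + r) - bfun p q x - bfun p q r - d)) *
  (c * tau / fine (Nfun p q eta tau)).

Lemma Sbdry_integrandE (c x r tau eta : R) :
  Sbdry_integrand c p q x 0 0 r 0 0 tau eta = ((szego_density c x r 0 tau eta)%:C)%C.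
Proof.
rewrite /Sbdry_integrand /cexp /szego_density /= !(subrr, mulr0, addr0, cos0, sin0, mulr1).
rewrite -[(_ +i* 0)%C]/((_)%:C)%C -rmorphM /=.
by rewrite subr0; congr ((expR _ * _)%:C)%C; ring.
Qed.

Lemma S_integrandE (c x r h k tau eta : R) :
  S_integrand c p q (bpt1 x) (bpt2 p q x h) (bpt1 r) (bpt2 p q r k) tau eta
  = ((szego_density c x r (h + k) tau eta)%:C)%C.
Proof.
rewrite /S_integrand /cexp /szego_density /bpt1 /bpt2 /=.
rewrite !(subrr, oppr0, mulr0, mul0r, addr0, add0r, subr0, cos0, sin0, mulr1).
rewrite -[(_ +i* 0)%C]/((_)%:C)%C -rmorphM /=.
by congr ((expR _ * _)%:C)%C; ring.
Qed.

Lemma szego_density_ge0 (c x r d tau eta : R) : 0 <= c -> 0 <= tau ->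
  0 <= szego_density c x r d tau eta.
Proof.
move=> c0 t0; rewrite /szego_density mulr_ge0 ?expR_ge0 // divr_ge0 ?mulr_ge0 //.
by apply/fine_ge0/integral_ge0 => l _; rewrite lee_fin expR_ge0.
Qed.

Lemma szego_density_ge (c x r d tau eta k m a : R) : 0 < c -> 1 <= tau -> 0 < a ->
  (forall l, 2 * tau * (eta * l - bfun p q l) <=
     tau * (eta * (x + r) - bfun p q x - bfun p q r) + k - a * (l - m) ^+ 2) ->
  c * tau * expR (- (tau * d)) * (normal_peak (Num.sqrt (a^-1 / 2)) / expR k)
    <= szego_density c x r d tau eta.
Proof.
move=> c0 t1 a0 dom.
set E := tau * (eta * (x + r) - bfun p q x - bfun p q r).
set pk := normal_peak _.
have pk0 : 0 < pk by exact: normal_peak_sqrt_gt0.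
have t0 : 0 < tau by lra.
have Nle : (Nfun p q eta tau <= (expR (E + k) / pk)%:E)%E :=
  @integral_expR_le_gauss R _ _ _ _ a0 dom.
have Ngt := Nfun_gt0 eta tau (ltW t0).
rewrite /szego_density.
(* Both bounds on N are needed: [fine] sends [+oo] to [0], and [x / 0 = 0]. *)
case: (Nfun p q eta tau) Nle Ngt => [n| |] //= Nle Ngt.
rewrite lee_fin in Nle; rewrite lte_fin in Ngt.
have -> : tau * (eta * (x + r) - bfun p q x - bfun p q r - d) = E + - (tau * d).
  by rewrite /E; ring.
rewrite expRD.
have -> : c * tau * expR (- (tau * d)) * (pk / expR k) =
    expR E * expR (- (tau * d)) * (c * tau / (expR (E + k) / pk)).
  by rewrite expRD; field; rewrite !gt_eqF ?expR_gt0.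
rewrite ler_pM2l ?mulr_gt0 ?expR_gt0 //.
by rewrite ler_pM2l ?mulr_gt0 // lef_pV2 ?posrE ?divr_gt0 ?expR_gt0.
Qed.

(* Laplace-method hypothesis: [eta0] stands for b'(x), and for [eta] within [1/tau] of it
   the exponent of N(eta, tau) is dominated by a Gaussian in [l] centred at [m]. *)
Definition gauss_dominated_at (x r eta0 k m a : R) : Prop :=
  forall tau eta l, 1 <= tau -> `|tau * (eta - eta0)| <= 1 ->
    2 * tau * (eta * l - bfun p q l) <=
    tau * (eta * (x + r) - bfun p q x - bfun p q r) + k - a * (l - m) ^+ 2.

Definition gauss_dominated (x r : R) : Prop :=
  exists eta0 k m a, 0 < a /\ gauss_dominated_at x r eta0 k m a.

Lemma szego_density_eta_integral_ge (c x r d tau eta0 k m a : R) :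
  0 < c -> 0 < a -> 1 <= tau -> gauss_dominated_at x r eta0 k m a ->
  ((2 * c * (normal_peak (Num.sqrt (a^-1 / 2)) / expR k) * expR (- (tau * d)))%:E
    <= \int[@lebesgue_measure R]_(eta in [set: R]) (szego_density c x r d tau eta)%:E)%E.
Proof.
move=> c0 a0 t1 dom.
set C1 := _ / expR k.
have C10 : 0 < C1 by rewrite divr_gt0 ?expR_gt0 ?normal_peak_sqrt_gt0.
have t0 : 0 < tau by lra.
have ti : tau * tau^-1 = 1 by rewrite mulfV ?gt_eqF.
have -> : 2 * c * C1 * expR (- (tau * d)) =
    (c * tau * expR (- (tau * d)) * C1) * ((eta0 + tau^-1) - (eta0 - tau^-1)).
  by field; rewrite gt_eqF.
apply: integral_ge_itv => //.
- have : 0 < tau^-1 by rewrite invr_gt0.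
  lra.
- by apply/ltW; rewrite mulr_gt0 // !mulr_gt0 ?expR_gt0.
- by move=> eta _; rewrite lee_fin szego_density_ge0 ?ltW.
move=> eta /andP[e1 e2]; rewrite lee_fin.
apply: szego_density_ge => // l; apply: dom => //.
have := ler_wpM2l (ltW t0) e1; have := ler_wpM2l (ltW t0) e2.
rewrite mulrDr mulrBr ti ler_norml mulrBr => h2 h1; apply/andP; split; lra.
Qed.

Lemma szego_kernel_ge (c x r : R) : 0 < c -> gauss_dominated x r ->
  exists2 C : R, 0 < C & forall d T, 0 <= d -> 1 <= T ->
    ((C * (T - 1) * expR (- (T * d)))%:E <=
      kernel_value (fun tau eta => ((szego_density c x r d tau eta)%:C)%C))%E.
Proof.
move=> c0 [eta0 [k [m [a [a0 dom]]]]].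
set C := 2 * c * (normal_peak (Num.sqrt (a^-1 / 2)) / expR k).
have C0 : 0 < C by rewrite !mulr_gt0 ?normal_peak_sqrt_gt0 ?invr_gt0 ?expR_gt0.
exists C => // d T d0 T1; rewrite /kernel_value /=.
rewrite -mulrA [(T - 1) * _]mulrC mulrA.
apply: integral_ge_itv => //.
- by move=> t /=; rewrite !in_itv /= andbT => /andP[t1 _]; lra.
- by apply/ltW; rewrite mulr_gt0 ?expR_gt0.
- by move=> tau /=; rewrite in_itv /= andbT => t0;
    apply: integral_ge0 => eta _; rewrite lee_fin szego_density_ge0 ?ltW.
move=> tau /andP[t1 tT].
apply: le_trans (szego_density_eta_integral_ge _ _ _ d _ _ _ _ _ c0 a0 t1 dom).
by rewrite lee_fin ler_pM2l // ler_expR lerN2 ler_wpM2r.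
Qed.

Lemma szego_kernel0_pinfty (c x r : R) : 0 < c -> gauss_dominated x r ->
  kernel_value (fun tau eta => ((szego_density c x r 0 tau eta)%:C)%C) = +oo%E.
Proof.
move=> c0 dom; have [C C0 kernel_ge] := szego_kernel_ge c x r c0 dom.
apply/eqyP => A A0.
have T1 : 1 <= 1 + A / C by rewrite lerDl divr_ge0 ?ltW.
apply: le_trans (kernel_ge 0 _ (lexx 0) T1).
by rewrite mulr0 oppr0 expR0 mulr1 lee_fin addrAC subrr add0r mulrC divfK ?gt_eqF.
Qed.

Lemma szego_kernel_blowup (c x r : R) : 0 < c -> gauss_dominated x r ->
  forall M : R, exists2 e : R, 0 < e & forall d, 0 < d < e ->
    (M%:E <= kernel_value (fun tau eta => ((szego_density c x r d tau eta)%:C)%C))%E.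
Proof.
move=> c0 dom M; have [C C0 kernel_ge] := szego_kernel_ge c x r c0 dom.
set T := 1 + `|M| * expR 1 / C.
have T1 : 1 <= T by rewrite /T lerDl !mulr_ge0 ?expR_ge0 // invr_ge0 ltW.
have T0 : 0 < T by lra.
exists T^-1; first by rewrite invr_gt0.
move=> d /andP[d0 dT]; apply: le_trans (kernel_ge d T (ltW d0) T1).
have -> : C * (T - 1) = `|M| * expR 1.
  by rewrite /T addrAC subrr add0r mulrC divfK ?gt_eqF.
have Td : T * d < 1 by rewrite -(mulfV (lt0r_neq0 T0)) ltr_pM2l.
have : `|M| * expR 1 * expR (-1) <= `|M| * expR 1 * expR (- (T * d)).
  by rewrite ler_wpM2l ?mulr_ge0 ?expR_ge0 // ler_expR lerN2 ltW.
rewrite -mulrA -expRD subrr expR0 mulr1 lee_fin; exact: le_trans (ler_norm M).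
Qed.

Lemma gauss_dominated_diag (x : R) : 0 < x ^+ 2 + p -> gauss_dominated x x.
Proof.
move=> ha; set a := (x ^+ 2 + p) / 2.
have a0 : 0 < a by rewrite /a; lra.
exists (x ^+ 3 + p * x + q), a^-1, x, a; split => // tau eta l t1 hs.
set u := l - x; set s := eta - (x ^+ 3 + p * x + q).
set D := u ^+ 2 * ((u / 2 + x) ^+ 2 + a).
have taylor : bfun p q l - bfun p q x - (x ^+ 3 + p * x + q) * u = D.
  by rewrite /D /a /u /bfun; field.
have exponentE : 2 * tau * (eta * l - bfun p q l) - tau * (eta * (x + x) - bfun p q x - bfun p q x)
   = 2 * tau * (s * u) - 2 * tau * D.
  by rewrite -taylor /s /u; field.
have su : tau * s * u <= `|u|.
  have : `|tau * s * u| <= `|u|.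
    by rewrite normrM; have := normr_ge0 u; rewrite -/s in hs; nra.
  exact/le_trans/ler_norm.
have aD : a * u ^+ 2 <= D.
  rewrite /D mulrDr; have := mulr_ge0 (sqr_ge0 u) (sqr_ge0 (u / 2 + x)); lra.
have D0 : 0 <= D by apply: le_trans aD; rewrite mulr_ge0 ?sqr_ge0 ?ltW.
have DtD : D <= tau * D by rewrite ler_peMl.
have ia : a * a^-1 = 1 by rewrite mulfV ?gt_eqF.
have ia0 : 0 < a^-1 by rewrite invr_gt0.
have u2 : u ^+ 2 = `|u| ^+ 2 by rewrite real_normK ?num_real.
have quad : 2 * `|u| - a * u ^+ 2 <= a^-1.
  by rewrite u2; have := sqr_ge0 (a * `|u| - 1); nra.
nra.
Qed.

Lemma gauss_dominated_crit (x r : R) : x ^+ 2 = - p -> r ^+ 2 = - p ->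
  gauss_dominated x r.
Proof.
move=> hx hr.
exists q, (`|x| + `|r| + 5 / 2 - p), 0, (1 / 2); split; first lra.
move=> tau eta l t1 hs.
have bcrit y : y ^+ 2 = - p -> bfun p q y = - (p ^+ 2 / 4) + q * y.
  move=> hy; rewrite /bfun (_ : y ^+ 4 = (y ^+ 2) ^+ 2); last by rewrite -exprM.
  by rewrite hy; field.
set s := eta - q.
have exponentE : 2 * tau * (eta * l - bfun p q l) - tau * (eta * (x + r) - bfun p q x - bfun p q r)
   = tau * s * (2 * l - x - r) - tau * ((l ^+ 2 + p) ^+ 2 / 2).
  by rewrite (bcrit x hx) (bcrit r hr) /s /bfun; field.
have linear : tau * s * (2 * l - x - r) <= 2 * `|l| + `|x| + `|r|.
  have : `|tau * s * (2 * l - x - r)| <= `|2 * l - x - r|.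
    by rewrite normrM; have := normr_ge0 (2 * l - x - r); rewrite -/s in hs; nra.
  move/(le_trans (ler_norm _)) => h; apply: le_trans h _.
  have n1 := ler_normB (2 * l - x) r.
  have n2 := ler_normB (2 * l) x.
  have n3 : `|2 * l| = 2 * `|l| by rewrite normrM ger0_norm.
  lra.
have quartic : (l ^+ 2 + p) ^+ 2 / 2 <= tau * ((l ^+ 2 + p) ^+ 2 / 2).
  by rewrite ler_peMl // divr_ge0 ?sqr_ge0.
have l2 : l ^+ 2 = `|l| ^+ 2 by rewrite real_normK ?num_real.
have absorb : 2 * `|l| - (l ^+ 2 + p) ^+ 2 / 2 <= 5 / 2 - p - l ^+ 2 / 2.
  by have := sqr_ge0 (l ^+ 2 + p - 1); have := sqr_ge0 (`|l| - 2); rewrite l2; nra.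
rewrite subr0; nra.
Qed.

End szego_kernel.

Theorem theorem2p2 (R : realType) (p q c x r : R) :
  p < 0 -> 0 < c ->
  ((x = r /\ Num.sqrt (- p) < `|x|) \/
   (`|x| = Num.sqrt (- p) /\ `|r| = Num.sqrt (- p))) ->
  ((forall tau eta : R, 0 < tau ->
      complex.Im (Sbdry_integrand c p q x 0 0 r 0 0 tau eta) = 0 /\
      0 <= complex.Re (Sbdry_integrand c p q x 0 0 r 0 0 tau eta)) /\
   kernel_value (Sbdry_integrand c p q x 0 0 r 0 0) = +oo%E) /\
  ((forall h k tau eta : R, 0 < h + k -> 0 < tau ->
      complex.Im (S_integrand c p q (bpt1 x) (bpt2 p q x h) (bpt1 r) (bpt2 p q r k) tau eta) = 0 /\
      0 <= complex.Re (S_integrand c p q (bpt1 x) (bpt2 p q x h) (bpt1 r) (bpt2 p q r k) tau eta)) /\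
   (forall M : R, exists2 e : R, 0 < e &
      forall h k : R, 0 < h + k < e ->
        (M%:E <= kernel_value
           (S_integrand c p q (bpt1 x) (bpt2 p q x h) (bpt1 r) (bpt2 p q r k)))%E)).
Proof.
move=> p0 c0 xr.
have sqrt2 : Num.sqrt (- p) ^+ 2 = - p by rewrite sqr_sqrtr // oppr_ge0 ltW.
have dom : gauss_dominated p q x r.
  case: xr => [[<- hx] | [hx hr]].
  - apply: gauss_dominated_diag; rewrite -(real_normK (num_real x)).
    have := sqrtr_ge0 (- p); nra.
  - by apply: gauss_dominated_crit; rewrite -real_normK ?num_real // ?hx ?hr.
have SbdryE : Sbdry_integrand c p q x 0 0 r 0 0 =
    fun tau eta => ((szego_density p q c x r 0 tau eta)%:C)%C.
  by apply/funext => tau; apply/funext => eta; exact: Sbdry_integrandE.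
have SE h k : S_integrand c p q (bpt1 x) (bpt2 p q x h) (bpt1 r) (bpt2 p q r k) =
    fun tau eta => ((szego_density p q c x r (h + k) tau eta)%:C)%C.
  by apply/funext => tau; apply/funext => eta; exact: S_integrandE.
split; split.
- by move=> tau eta t0; rewrite SbdryE /= szego_density_ge0 ?ltW.
- by rewrite SbdryE; exact: szego_kernel0_pinfty.
- by move=> h k tau eta _ t0; rewrite SE /= szego_density_ge0 ?ltW.
- move=> M; have [e e0 blowup] := szego_kernel_blowup _ _ _ _ _ c0 dom M.
  by exists e => // h k hk; rewrite SE; exact: blowup.
Qed.
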